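(* Let $(G,d)$ be a $p$-uniformly convex space with $p\in(1,\infty)$ and constant $c>0$, let $D\subset G$ and $T:D\rightrightarrows G$, and let $\tau\in[0,1]$. For $x,y\in D$, $x_+\in T(x)$, $y_+\in T(y)$ put $x_\tau=(1-\tau)x\oplus\tau x_+$ and $y_\tau=(1-\tau)y\oplus\tau y_+$. Then $$d(x_\tau,y_\tau)^p\le(1-\tau)^2d(x,y)^p+\tau^2d(x_+,y_+)^p+2(1-\tau)\tau\,\Delta^{(p,c)}(x,y,x_+,y_+)+\tfrac{2-c}{2}(1-\tau)\tau\big(d(y,x_+)^p+d(x,y_+)^p\big).$$
   Context: $(G,d)$ is uniquely geodesic; $(1-\tau)x\oplus\tau y$ is the point on the geodesic from $x$ to $y$ at distance $\tau d(x,y)$ from $x$. $(G,d)$ is $p$-uniformly convex with constant $c$ if $d(z,(1-\tau)x\oplus\tau y)^p\le(1-\tau)d(z,x)^p+\tau d(z,y)^p-\frac c2\tau(1-\tau)d(x,y)^p$ for all $\tau\in[0,1]$ and $x,y,z\in G$. $\Delta^{(p,c)}(x,y,u,v)=\frac c4\big(d(x,v)^p+d(y,u)^p-d(x,u)^p-d(y,v)^p\big)$. *)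

From Stdlib Require Import Reals Lra.
Open Scope R_scope.

Definition pw (t p : R) : R := if Rle_dec t 0 then 0 else Rpower t p.

Definition is_metric {G : Type} (d : G -> G -> R) : Prop :=
  (forall x y, 0 <= d x y) /\
  (forall x y, d x y = 0 <-> x = y) /\
  (forall x y, d x y = d y x) /\
  (forall x y z, d x z <= d x y + d y z).

Definition is_geodesic {G : Type} (d : G -> G -> R) (x y : G) (g : R -> G) : Prop :=
  g 0 = x /\ g 1 = y /\
  (forall s t, 0 <= s <= 1 -> 0 <= t <= 1 -> d (g s) (g t) = Rabs (s - t) * d x y).

(* (G,d) is uniquely geodesic, and geo x y is the (unique) geodesic from x to y;
   (1-t)x ⊕ t y := geo x y t, the point of the geodesic at distance t d(x,y) from x. *)
Definition uniquely_geodesic {G : Type} (d : G -> G -> R) (geo : G -> G -> R -> G) : Prop :=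
  forall x y, is_geodesic d x y (geo x y) /\
    (forall g, is_geodesic d x y g -> forall t, 0 <= t <= 1 -> g t = geo x y t).

Definition p_uniformly_convex {G : Type} (d : G -> G -> R) (geo : G -> G -> R -> G)
  (p c : R) : Prop :=
  forall (tau : R) (x y z : G), 0 <= tau <= 1 ->
    pw (d z (geo x y tau)) p <=
      (1 - tau) * pw (d z x) p + tau * pw (d z y) p
      - c / 2 * tau * (1 - tau) * pw (d x y) p.

Definition DeltaPC {G : Type} (d : G -> G -> R) (p c : R) (x y u v : G) : R :=
  c / 4 * (pw (d x v) p + pw (d y u) p - pw (d x u) p - pw (d y v) p).

(* Three applications of p-uniform convexity along the geodesic [x, x_+]: from y_tau,
   which bounds d(x_tau,y_tau)^p by d(x_tau,y)^p and d(x_tau,y_+)^p (with a correction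
   in d(y,y_+)^p), and then from y and from y_+.  Combined with weights 1 - tau and tau,
   the correction terms -(c/2) tau (1 - tau) (d(x,x_+)^p + d(y,y_+)^p) are exactly what
   Delta^{(p,c)} and the (2 - c)/2 term reassemble into, so the stated bound is a
   rearrangement of the resulting inequality. *)
From Stdlib Require Import Reals Lra.
Open Scope R_scope.

Section UniformlyConvexGeodesics.

Variables (G : Type) (d : G -> G -> R) (geo : G -> G -> R -> G) (p c : R).
Hypothesis d_sym : forall x y, d x y = d y x.
Hypothesis puc : p_uniformly_convex d geo p c.

Lemma p_uniformly_convex_from (tau : R) (x y z : G) : 0 <= tau <= 1 ->
  pw (d (geo x y tau) z) p <=
    (1 - tau) * pw (d x z) p + tau * pw (d y z) p
    - c / 2 * tau * (1 - tau) * pw (d x y) p.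
Proof.
  intros Htau.
  rewrite d_sym, (d_sym x z), (d_sym y z).
  exact (puc tau x y z Htau).
Qed.

Lemma p_uniformly_convex_geodesic_pair (tau : R) (x y u v : G) : 0 <= tau <= 1 ->
  pw (d (geo x u tau) (geo y v tau)) p <=
    (1 - tau) ^ 2 * pw (d x y) p + tau ^ 2 * pw (d u v) p
    + (1 - tau) * tau * (pw (d y u) p + pw (d x v) p)
    - c / 2 * (1 - tau) * tau * (pw (d x u) p + pw (d y v) p).
Proof.
  intros Htau.
  pose proof (puc tau y v (geo x u tau) Htau) as Hyt.
  pose proof (p_uniformly_convex_from tau x u y Htau) as Hy.
  pose proof (p_uniformly_convex_from tau x u v Htau) as Hv.
  rewrite (d_sym u y) in Hy.
  assert (Hy' := Rmult_le_compat_l (1 - tau) _ _ ltac:(lra) Hy).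
  assert (Hv' := Rmult_le_compat_l tau _ _ (proj1 Htau) Hv).
  lra.
Qed.

End UniformlyConvexGeodesics.

Theorem mainTheorem4 (G : Type) (d : G -> G -> R) (geo : G -> G -> R -> G)
  (p c : R)
  (Hmet : is_metric d) (Hgeo : uniquely_geodesic d geo)
  (Hp : 1 < p) (Hc : 0 < c) (Hpuc : p_uniformly_convex d geo p c)
  (D : G -> Prop) (T : G -> G -> Prop) (tau : R) (Htau : 0 <= tau <= 1)
  (x y xp yp : G) (Hx : D x) (Hy : D y) (Hxp : T x xp) (Hyp : T y yp) :
  let xt := geo x xp tau in
  let yt := geo y yp tau in
  pw (d xt yt) p <=
    (1 - tau) ^ 2 * pw (d x y) p + tau ^ 2 * pw (d xp yp) p
    + 2 * (1 - tau) * tau * DeltaPC d p c x y xp yp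
    + (2 - c) / 2 * (1 - tau) * tau * (pw (d y xp) p + pw (d x yp) p).
Proof.
  intros xt yt; subst xt yt.
  destruct Hmet as [_ [_ [d_sym _]]].
  pose proof (p_uniformly_convex_geodesic_pair G d geo p c d_sym Hpuc tau x y xp yp Htau)
    as Hpair.
  unfold DeltaPC.
  lra.
Qed.
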